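(* Let $A\in SL_3(\mathfrak{o})$. Then there exist $y_1,y_2,y_3\in Y(\mathfrak{o})$, $d\in D(3)$, $u\in U(3)$ and $C\in\Gamma_\infty(3)$ such that $$A=\varphi_2(y_1^{-1})\,\varphi_1(y_2^{-1})\,\varphi_2(y_3^{-1})\,d\,u\,C.$$
   Context: Let $\omega=e^{2\pi i/3}$, $\mathfrak{o}=\mathbb{Z}[\omega]$ (a PID), $\mathfrak{o}^\times=\{\pm1,\pm\omega,\pm\omega^2\}$. Fix a set of representatives of the nonzero elements of $\mathfrak{o}$ modulo multiplication by units (e.g. the $z\neq0$ with $0\le\arg z<\pi/3$); ''$c\in(\mathfrak{o}-\{0\})/\mathfrak{o}^\times$'' means $c$ is one of these representatives. For each nonzero $c$ fix a set of representatives of $\mathfrak{o}/c\mathfrak{o}$; ''$a\in\mathfrak{o}/c\mathfrak{o}$'' means $a$ belongs to this set. $Y(\mathfrak{o})=\{\begin{pmatrix}a&b\\c&d\end{pmatrix}\in SL_2(\mathfrak{o}) : c\in(\mathfrak{o}-\{0\})/\mathfrak{o}^\times,\ a\in\mathfrak{o}/c\mathfrak{o}\}\cup\{I_2\}$. $\Gamma(3)=\{A\in SL_3(\mathfrak{o}):A\equiv I_3\pmod{3\mathfrak{o}}\}$ (entrywise) and $\Gamma_\infty(3)$ is its subgroup of upper triangular unipotent matrices. $D(3)$ is the set of diagonal matrices $\mathrm{diag}(i,j,k)$ with $i,j,k\in\mathfrak{o}$, $ijk=1$. $U(3)$ is the set of matrices $\begin{pmatrix}1&\alpha&\beta\\&1&\gamma\\&&1\end{pmatrix}$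 with $\alpha,\beta,\gamma\in\{0,1,2\}+\{0,1,2\}\omega$. For $y=\begin{pmatrix}a&b\\c&d\end{pmatrix}\in SL_2(\mathfrak{o})$, $\varphi_1(y)=\begin{pmatrix}a&b&0\\c&d&0\\0&0&1\end{pmatrix}$ and $\varphi_2(y)=\begin{pmatrix}1&0&0\\0&a&b\\0&c&d\end{pmatrix}$. *)

(* the Eisenstein integers o = Z[omega] are realised as a
   subring of the algebraic complex numbers algC. *)
From HB Require Import structures.
From mathcomp Require Import all_boot all_order all_algebra all_field.
Set Implicit Arguments. Unset Strict Implicit. Unset Printing Implicit Defensive.
Import Order.TTheory GRing.Theory Num.Theory.
Local Open Scope ring_scope.

(* omega = e^{2 pi i/3} = (-1 + i sqrt 3)/2 *)
Definition omega : algC := (-1 + 'i * sqrtC 3%:R) / 2%:R.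

Definition in_o (z : algC) : Prop := exists a b : int, z = a%:~R + b%:~R * omega.

Definition unit_o (u : algC) : Prop := in_o u /\ exists v, in_o v /\ u * v = 1.

Definition dvd_o (c z : algC) : Prop := exists q, in_o q /\ z = q * c.

Definition unit_rep_system (R : algC -> Prop) : Prop :=
  (forall z, R z -> in_o z /\ z != 0) /\
  (forall z, in_o z -> z != 0 -> exists! r, R r /\ exists u, unit_o u /\ r = u * z).

Definition residue_rep_system (c : algC) (S : algC -> Prop) : Prop :=
  (forall a, S a -> in_o a) /\
  (forall z, in_o z -> exists! a, S a /\ dvd_o c (z - a)).

Definition inSL2 (y : 'M[algC]_2) : Prop := (forall i j, in_o (y i j)) /\ \det y = 1.
Definition inSL3 (A : 'M[algC]_3) : Prop := (forall i j, in_o (A i j)) /\ \det A = 1.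

Definition i0_2 : 'I_2 := @Ordinal 2 0 isT.
Definition i1_2 : 'I_2 := @Ordinal 2 1 isT.

(* Y(o), relative to the chosen representatives R (for c) and S c (for a mod c) *)
Definition Yset (R : algC -> Prop) (S : algC -> algC -> Prop) (y : 'M[algC]_2) : Prop :=
  y = 1%:M \/ (inSL2 y /\ R (y i1_2 i0_2) /\ S (y i1_2 i0_2) (y i0_2 i0_2)).

Definition phi1 (y : 'M[algC]_2) : 'M[algC]_3 :=
  \matrix_(i < 3, j < 3)
    if ((i < 2) && (j < 2))%N then y (inord i) (inord j) else (i == j)%:R.
Definition phi2 (y : 'M[algC]_2) : 'M[algC]_3 :=
  \matrix_(i < 3, j < 3)
    if ((0 < i) && (0 < j))%N then y (inord i.-1) (inord j.-1) else (i == j)%:R.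

Definition upper_unipotent (C : 'M[algC]_3) : Prop :=
  forall i j : 'I_3, (j <= i)%N -> C i j = (i == j)%:R.

Definition Gamma3 (C : 'M[algC]_3) : Prop :=
  inSL3 C /\ forall i j, dvd_o 3%:R (C i j - (i == j)%:R).
Definition GammaInf3 (C : 'M[algC]_3) : Prop := Gamma3 C /\ upper_unipotent C.

Definition D3 (d : 'M[algC]_3) : Prop :=
  exists i j k : algC, [/\ in_o i, in_o j, in_o k, i * j * k = 1 &
    d = \matrix_(r < 3, s < 3)
          (if r == s then (if r == 0 :> nat then i else if r == 1 :> nat then j else k)
           else 0)].

Definition small_o (z : algC) : Prop :=
  exists a b : nat, [/\ (a <= 2)%N, (b <= 2)%N & z = a%:R + b%:R * omega].

Definition U3 (u : 'M[algC]_3) : Prop :=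
  upper_unipotent u /\ forall i j : 'I_3, (i < j)%N -> small_o (u i j).

From HB Require Import structures.
From mathcomp Require Import all_boot all_order all_algebra all_field.
From mathcomp Require Import ring zify.
Import Order.TTheory GRing.Theory Num.Theory.
Local Open Scope ring_scope.

(* Z[omega] is Euclidean for the norm a^2 - ab + b^2, so any x, z in o have a gcd
   g = s x + t z with x = p g, z = q g and s p + t q = 1.  Scaling the row (q, -p) by
   the unit that takes q to its representative c, and completing it to an element
   of SL_2(o) whose top-left entry is reduced modulo c, gives y in Y(o) whose bottom
   row kills (x, z).  Three such row operations, on rows (2,3), (1,2) and (2,3),
   make A upper triangular.  An upper triangular element of SL_3(o) is its diagonal
   d times a unipotent matrix, and reducing the entries of the latter modulo 3 one
   at a time splits it as u C with u in U(3) and C in Gamma_infty(3). *)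

Lemma omega_sqr : omega ^+ 2 = -1 - omega.
Proof.
rewrite /omega; set s := sqrtC _.
have s2 : s ^+ 2 = 3%:R by rewrite sqrtCK.
have two_neq0 : (2%:R : algC) != 0 by rewrite pnatr_eq0.
apply/eqP; rewrite -subr_eq0; apply/eqP.
have -> : ((-1 + 'i * s) / 2%:R) ^+ 2 - (-1 - (-1 + 'i * s) / 2%:R) =
          ('i ^+ 2 * s ^+ 2 + 3%:R) / 4%:R by field.
by rewrite sqrCi s2 mulN1r addNr mul0r.
Qed.

Definition eis (a b : int) : algC := a%:~R + b%:~R * omega.

Lemma eisD a b c d : eis a b + eis c d = eis (a + c) (b + d).
Proof. rewrite /eis !intrD; ring. Qed.

Lemma eisN a b : - eis a b = eis (- a) (- b).
Proof. rewrite /eis !intrN; ring. Qed.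

Lemma eisM a b c d : eis a b * eis c d = eis (a * c - b * d) (a * d + b * c - b * d).
Proof.
rewrite /eis !(intrD, intrM, intrN).
transitivity (a%:~R * c%:~R + (a%:~R * d%:~R + b%:~R * c%:~R) * omega
              + b%:~R * d%:~R * omega ^+ 2 : algC); first by ring.
rewrite omega_sqr; ring.
Qed.

Lemma in_o_eis a b : in_o (eis a b).
Proof. by exists a, b. Qed.

Lemma in_o_nat n : in_o n%:R.
Proof. by exists n%:Z, 0; rewrite mul0r addr0. Qed.

Lemma in_o0 : in_o 0.
Proof. exact: (in_o_nat 0). Qed.

Lemma in_o1 : in_o 1.
Proof. exact: (in_o_nat 1). Qed.

Lemma in_oD {x y} : in_o x -> in_o y -> in_o (x + y).
Proof. move=> [a [b ->]] [c [d ->]]; rewrite -/(eis a b) -/(eis c d) eisD; exact: in_o_eis. Qed.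

Lemma in_oN {x} : in_o x -> in_o (- x).
Proof. move=> [a [b ->]]; rewrite -/(eis a b) eisN; exact: in_o_eis. Qed.

Lemma in_oB {x y} : in_o x -> in_o y -> in_o (x - y).
Proof. by move=> ox oy; apply: in_oD => //; apply: in_oN. Qed.

Lemma in_oM {x y} : in_o x -> in_o y -> in_o (x * y).
Proof. move=> [a [b ->]] [c [d ->]]; rewrite -/(eis a b) -/(eis c d) eisM; exact: in_o_eis. Qed.

Ltac in_o_closure := repeat first
  [ assumption | exact: in_o0 | exact: in_o1 | exact: in_o_nat | exact: in_o_eis
  | apply: in_oB | apply: in_oD | apply: in_oM | apply: in_oN ].

Definition eis_norm (a b : int) : int := a * a - a * b + b * b.

Lemma eis_norm_ge0 a b : 0 <= eis_norm a b.
Proof. rewrite /eis_norm; nia. Qed.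

Lemma eis_norm_gt0 {a b} : (a, b) != (0, 0) -> 0 < eis_norm a b.
Proof.
rewrite /eis_norm; have [-> | a_neq0] := eqVneq a 0; last by nia.
by rewrite xpair_eqE eqxx /= => b_neq0; nia.
Qed.

Lemma eis_norm_lt_sqr {n e f : int} :
  -n <= 2 * e < n -> -n <= 2 * f < n -> eis_norm e f < n * n.
Proof. rewrite /eis_norm; nia. Qed.

Lemma eis_divmod a b {c d} : (c, d) != (0, 0) ->
  exists q1 q2 r1 r2,
    eis a b = eis q1 q2 * eis c d + eis r1 r2 /\ eis_norm r1 r2 < eis_norm c d.
Proof.
move=> /eis_norm_gt0; set n := eis_norm c d => n_gt0.
(* (a + b w)(c + d w^2) = u + v w and (c + d w)(c + d w^2) = n, so the quotient
   q1 + q2 w is (u + v w) / n rounded coordinatewise. *)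
pose u := a * c - a * d + b * d; pose v := b * c - a * d.
pose q1 := ((2 * u + n) %/ (2 * n))%Z; pose q2 := ((2 * v + n) %/ (2 * n))%Z.
pose r1 := a - (q1 * c - q2 * d); pose r2 := b - (q1 * d + q2 * c - q2 * d).
exists q1, q2, r1, r2; split; first by rewrite eisM eisD /r1 /r2; congr eis; ring.
have norm_r : eis_norm r1 r2 * n = eis_norm (u - q1 * n) (v - q2 * n).
  by rewrite /r1 /r2 /u /v /n /eis_norm; ring.
have u_bd : -n <= 2 * (u - q1 * n) < n by rewrite /q1; lia.
have v_bd : -n <= 2 * (v - q2 * n) < n by rewrite /q2; lia.
by have := eis_norm_lt_sqr u_bd v_bd; rewrite -norm_r; nia.
Qed.

Lemma in_o_bezout {x z} : in_o x -> in_o z ->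
  exists g p q s t, [/\ in_o p, in_o q, in_o s & in_o t] /\
    [/\ x = p * g, z = q * g & s * x + t * z = g].
Proof.
move=> [a [b ->]] [c [d ->]]; rewrite -/(eis a b) -/(eis c d).
have [n] := ubnP `|eis_norm c d|%N; elim: n a b c d => // n IHn a b c d lt_cd_n.
have [[-> ->] | cd_neq0] := eqVneq (c, d) (0, 0).
  exists (eis a b), 1, 0, 1, 0; split; first by split; in_o_closure.
  have eis00 : eis 0 0 = 0 by rewrite /eis mul0r addr0.
  by rewrite eis00 mul1r mul0r mulr0 addr0.
have [q1 [q2 [r1 [r2 [div_ab lt_r_cd]]]]] := eis_divmod a b cd_neq0.
have lt_r_n : (`|eis_norm r1 r2| < n)%N.
  by have := eis_norm_ge0 r1 r2; have := eis_norm_ge0 c d; lia.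
have [g [p [q [s [t [[op oq os ot] [cd_pg r_qg bez]]]]]]] := IHn c d r1 r2 lt_r_n.
exists g, (eis q1 q2 * p + q), p, t, (s - t * eis q1 q2).
split; first by split; in_o_closure.
rewrite div_ab cd_pg r_qg; split => //; first by ring.
by rewrite -cd_pg -r_qg -bez; ring.
Qed.

Definition mx2 (a b c d : algC) : 'M[algC]_2 :=
  \matrix_(i, j) nth 0 (nth [::] [:: [:: a; b]; [:: c; d]] i) j.

Lemma det_mx2 (y : 'M[algC]_2) :
  \det y = y i0_2 i0_2 * y i1_2 i1_2 - y i0_2 i1_2 * y i1_2 i0_2.
Proof.
rewrite (expand_det_row _ i0_2) !big_ord_recr big_ord0 /= /cofactor !det_mx11 !mxE.
rewrite add0r expr0 expr1 mul1r mulN1r mulrN.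
have [-> ->] : widen_ord (leqnSn 1) ord_max = i0_2 /\ ord_max = i1_2.
  by split; apply: val_inj.
by have [-> ->] : lift i0_2 0 = i1_2 /\ lift i1_2 0 = i0_2 by split; apply: val_inj.
Qed.

Lemma Yset_inSL2 {R S y} : Yset R S y -> inSL2 y.
Proof.
case=> [-> | [SL2y _]] //; split; last exact: det1.
by move=> i j; rewrite mxE; apply: in_o_nat.
Qed.

Section RepresentativeSystems.

Context {R : algC -> Prop} {S : algC -> algC -> Prop}.
Hypothesis HR : unit_rep_system R.
Hypothesis HS : forall c, R c -> residue_rep_system c (S c).

Lemma Yset_coprime_row {p q s t} :
  [/\ in_o p, in_o q, in_o s & in_o t] -> q != 0 -> s * p + t * q = 1 ->
  exists y u, [/\ Yset R S y, y i1_2 i0_2 = u * q & y i1_2 i1_2 = - (u * p)].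
Proof.
move=> [op oq os ot] q_neq0 bez.
have [r [[Rr [u [[ou [v [ov uv]]] r_uq]]] _]] := HR.2 q oq q_neq0.
have ovs : in_o (- (v * s)) by in_o_closure.
have [a [[Sa [k [ok a_vs]]] _]] := (HS _ Rr).2 _ ovs.
have a_eq : a = - (v * s) - k * r by rewrite -a_vs; ring.
have [or _] := HR.1 _ Rr; have oa := (HS _ Rr).1 a Sa.
exists (mx2 a (k * u * p - v * t) r (- (u * p))), u.
rewrite !mxE /=; split=> //; right; split; last by rewrite !mxE.
split; first by move=> [[|[|i]] ?] [[|[|j]] ?]; rewrite mxE //=; in_o_closure.
rewrite det_mx2 !mxE /= a_eq r_uq.
by transitivity (u * v * (s * p + t * q)); [ring | rewrite uv bez mulr1].
Qed.

Lemma Yset_annihilator {x z} : in_o x -> in_o z ->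
  exists y, Yset R S y /\ y i1_2 i0_2 * x + y i1_2 i1_2 * z = 0.
Proof.
move=> ox oz; have [-> | z_neq0] := eqVneq z 0.
  by exists 1%:M; split; [left | rewrite !mxE /= mul0r mulr0 addr0].
have [g [p [q [s [t [[op oq os ot] [x_pg z_qg bez]]]]]]] := in_o_bezout ox oz.
have g_neq0 : g != 0 by apply: contraNneq z_neq0 => g0; rewrite z_qg g0 mulr0.
have q_neq0 : q != 0 by apply: contraNneq z_neq0 => q0; rewrite z_qg q0 mul0r.
have coprime_pq : s * p + t * q = 1.
  by apply: (mulIf g_neq0); rewrite mul1r -[in RHS]bez x_pg z_qg; ring.
have [y [u [Yy y10 y11]]] := Yset_coprime_row (And4 op oq os ot) q_neq0 coprime_pq.
by exists y; split=> //; rewrite y10 y11 x_pg z_qg; ring.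
Qed.

End RepresentativeSystems.

Ltac case_ord3 i j := case: i => [[|[|[|i]]] ?] //; case: j => [[|[|[|j]]] ?] //=.

Definition i0_3 : 'I_3 := @Ordinal 3 0 isT.
Definition i1_3 : 'I_3 := @Ordinal 3 1 isT.
Definition i2_3 : 'I_3 := @Ordinal 3 2 isT.

Definition mx3 (a b c d e f g h k : algC) : 'M[algC]_3 :=
  \matrix_(i, j) nth 0 (nth [::] [:: [:: a; b; c]; [:: d; e; f]; [:: g; h; k]] i) j.

Lemma mx3_eta (M : 'M[algC]_3) :
  M = mx3 (M i0_3 i0_3) (M i0_3 i1_3) (M i0_3 i2_3)
          (M i1_3 i0_3) (M i1_3 i1_3) (M i1_3 i2_3)
          (M i2_3 i0_3) (M i2_3 i1_3) (M i2_3 i2_3).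
Proof.
apply/matrixP=> i j; rewrite mxE.
by case_ord3 i j; congr (M _ _); apply: val_inj.
Qed.

Lemma mulmx2E (M N : 'M[algC]_2) i j :
  (M *m N) i j = M i i0_2 * N i0_2 j + M i i1_2 * N i1_2 j.
Proof.
rewrite mxE !big_ord_recr big_ord0 /= add0r.
by have [-> ->] : widen_ord (leqnSn 1) ord_max = i0_2 /\ ord_max = i1_2 by split; apply: val_inj.
Qed.

Lemma mulmx3E (M N : 'M[algC]_3) i j :
  (M *m N) i j = M i i0_3 * N i0_3 j + M i i1_3 * N i1_3 j + M i i2_3 * N i2_3 j.
Proof.
rewrite mxE !big_ord_recr big_ord0 /= add0r.
have [-> ->] : widen_ord (leqnSn 2) (widen_ord (leqnSn 1) ord_max) = i0_3 /\
               widen_ord (leqnSn 2) ord_max = i1_3 by split; apply: val_inj.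
by have -> : ord_max = i2_3 by apply: val_inj.
Qed.

Lemma mul_mx3 a b c d e f g h k a' b' c' d' e' f' g' h' k' :
  mx3 a b c d e f g h k *m mx3 a' b' c' d' e' f' g' h' k' =
  mx3 (a * a' + b * d' + c * g') (a * b' + b * e' + c * h') (a * c' + b * f' + c * k')
      (d * a' + e * d' + f * g') (d * b' + e * e' + f * h') (d * c' + e * f' + f * k')
      (g * a' + h * d' + k * g') (g * b' + h * e' + k * h') (g * c' + h * f' + k * k').
Proof.
apply/matrixP=> i j; rewrite mulmx3E !mxE /=.
by case_ord3 i j.
Qed.

Lemma det_mx3 a b c d e f g h k :
  \det (mx3 a b c d e f g h k) =
  a * (e * k - f * h) - b * (d * k - f * g) + c * (d * h - e * g).
Proof.
rewrite (expand_det_row _ i0_3) !big_ord_recr big_ord0 /= /cofactor !det_mx2 !mxE /=.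
ring.
Qed.

Lemma mx3_1 : 1%:M = mx3 1 0 0 0 1 0 0 0 1.
Proof.
by apply/matrixP=> i j; rewrite !mxE; case_ord3 i j.
Qed.

Lemma inord0_2 : inord 0 = i0_2. Proof. by apply: val_inj; rewrite /= inordK. Qed.
Lemma inord1_2 : inord 1 = i1_2. Proof. by apply: val_inj; rewrite /= inordK. Qed.

Lemma phi1_mx3 y :
  phi1 y = mx3 (y i0_2 i0_2) (y i0_2 i1_2) 0 (y i1_2 i0_2) (y i1_2 i1_2) 0 0 0 1.
Proof.
apply/matrixP=> i j; rewrite !mxE.
by case_ord3 i j; rewrite ?inord0_2 ?inord1_2.
Qed.

Lemma phi2_mx3 y :
  phi2 y = mx3 1 0 0 0 (y i0_2 i0_2) (y i0_2 i1_2) 0 (y i1_2 i0_2) (y i1_2 i1_2).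
Proof.
apply/matrixP=> i j; rewrite !mxE.
by case_ord3 i j; rewrite ?inord0_2 ?inord1_2.
Qed.

Lemma phi1M y z : phi1 (y *m z) = phi1 y *m phi1 z.
Proof. by rewrite !phi1_mx3 mul_mx3 !mulmx2E; congr mx3; ring. Qed.

Lemma phi2M y z : phi2 (y *m z) = phi2 y *m phi2 z.
Proof. by rewrite !phi2_mx3 mul_mx3 !mulmx2E; congr mx3; ring. Qed.

Lemma phi1_1 : phi1 1%:M = 1%:M.
Proof. by rewrite phi1_mx3 !mxE mx3_1. Qed.

Lemma phi2_1 : phi2 1%:M = 1%:M.
Proof. by rewrite phi2_mx3 !mxE mx3_1. Qed.

Lemma phi1_invmxK {y} (M : 'M[algC]_3) : \det y = 1 -> phi1 (invmx y) *m (phi1 y *m M) = M.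
Proof.
by move=> det_y; rewrite mulmxA -phi1M mulVmx ?phi1_1 ?mul1mx // unitmxE det_y unitr1.
Qed.

Lemma phi2_invmxK {y} (M : 'M[algC]_3) : \det y = 1 -> phi2 (invmx y) *m (phi2 y *m M) = M.
Proof.
by move=> det_y; rewrite mulmxA -phi2M mulVmx ?phi2_1 ?mul1mx // unitmxE det_y unitr1.
Qed.

Lemma det_phi1 y : \det (phi1 y) = \det y.
Proof. rewrite phi1_mx3 det_mx3 det_mx2; ring. Qed.

Lemma det_phi2 y : \det (phi2 y) = \det y.
Proof. rewrite phi2_mx3 det_mx3 det_mx2; ring. Qed.

Lemma inSL3_mul {M N} : inSL3 M -> inSL3 N -> inSL3 (M *m N).
Proof.
move=> [oM det_M] [oN det_N]; split; last by rewrite det_mulmx det_M det_N mul1r.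
by move=> i j; rewrite mulmx3E; in_o_closure.
Qed.

Lemma inSL3_phi1 {y} : inSL2 y -> inSL3 (phi1 y).
Proof.
move=> [oy det_y]; split; last by rewrite det_phi1.
by move=> i j; rewrite mxE; case: ifP => _; in_o_closure.
Qed.

Lemma inSL3_phi2 {y} : inSL2 y -> inSL3 (phi2 y).
Proof.
move=> [oy det_y]; split; last by rewrite det_phi2.
by move=> i j; rewrite mxE; case: ifP => _; in_o_closure.
Qed.

Lemma phi1_mul_row1 y (M : 'M[algC]_3) j :
  (phi1 y *m M) i1_3 j = y i1_2 i0_2 * M i0_3 j + y i1_2 i1_2 * M i1_3 j.
Proof. rewrite mulmx3E !mxE /= inord0_2 inord1_2; ring. Qed.

Lemma phi1_mul_row2 y (M : 'M[algC]_3) j : (phi1 y *m M) i2_3 j = M i2_3 j.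
Proof. rewrite mulmx3E !mxE /=; ring. Qed.

Lemma phi2_mul_row1 y (M : 'M[algC]_3) j :
  (phi2 y *m M) i1_3 j = y i0_2 i0_2 * M i1_3 j + y i0_2 i1_2 * M i2_3 j.
Proof. rewrite mulmx3E !mxE /= inord0_2 inord1_2; ring. Qed.

Lemma phi2_mul_row2 y (M : 'M[algC]_3) j :
  (phi2 y *m M) i2_3 j = y i1_2 i0_2 * M i1_3 j + y i1_2 i1_2 * M i2_3 j.
Proof. rewrite mulmx3E !mxE /= inord0_2 inord1_2; ring. Qed.

Lemma small_o_in_o {s} : small_o s -> in_o s.
Proof. by case=> [a [b [_ _ ->]]]; exists a%:Z, b%:Z. Qed.

Lemma small_o_rep {z} : in_o z -> exists s, small_o s /\ dvd_o 3%:R (z - s).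
Proof.
case=> [a [b ->]].
exists ((absz (a %% 3)%Z)%:R + (absz (b %% 3)%Z)%:R * omega); split.
  by exists (absz (a %% 3)%Z), (absz (b %% 3)%Z); split=> //; lia.
exists (eis (a %/ 3)%Z (b %/ 3)%Z); split; first exact: in_o_eis.
rewrite !natr_absz !ger0_norm ?modz_ge0 // {1}(divz_eq a 3) {1}(divz_eq b 3).
rewrite /eis !intrD !intrM; ring.
Qed.

Lemma dvd_o0 c : dvd_o c 0.
Proof. by exists 0; split; [exact: in_o0 | rewrite mul0r]. Qed.

Lemma upper_triangular_factor {T} :
  inSL3 T -> T i1_3 i0_3 = 0 -> T i2_3 i0_3 = 0 -> T i2_3 i1_3 = 0 ->
  exists d N : 'M[algC]_3, [/\ D3 d, forall i j, in_o (N i j), upper_unipotent N & T = d *m N].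
Proof.
move=> [oT det_T] t10 t20 t21; rewrite (mx3_eta T) t10 t20 t21 det_mx3 in det_T *.
move: (oT i0_3 i0_3) (oT i0_3 i1_3) (oT i0_3 i2_3) (oT i1_3 i1_3) (oT i1_3 i2_3) (oT i2_3 i2_3).
move: (T i0_3 i0_3) (T i0_3 i1_3) (T i0_3 i2_3) (T i1_3 i1_3) (T i1_3 i2_3) (T i2_3 i2_3) det_T.
move=> a b c d e f det_T oa ob oc od oe of_.
have unit_diag : a * d * f = 1 by rewrite -det_T; ring.
exists (mx3 a 0 0 0 d 0 0 0 f), (mx3 1 (b * (d * f)) (c * (d * f)) 0 1 (e * (a * f)) 0 0 1).
split.
- exists a, d, f; split=> //.
  by apply/matrixP=> i j; rewrite !mxE; case_ord3 i j.
- by move=> i j; rewrite mxE; case_ord3 i j; in_o_closure.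
- by move=> i j; rewrite mxE; case_ord3 i j.
- rewrite mul_mx3; congr mx3; try ring.
  all: by rewrite -[LHS]mulr1 -unit_diag; ring.
Qed.

Lemma unipotent_factor {N : 'M[algC]_3} : (forall i j, in_o (N i j)) -> upper_unipotent N ->
  exists u C, [/\ U3 u, GammaInf3 C & N = u *m C].
Proof.
move=> oN unip_N; rewrite (mx3_eta N).
move: (oN i0_3 i1_3) (oN i0_3 i2_3) (oN i1_3 i2_3).
move: (N i0_3 i1_3) (N i0_3 i2_3) (N i1_3 i2_3) => x y z ox oy oz.
rewrite !unip_N //=.
have [a [sa [ka [oka xa]]]] := small_o_rep ox.
have [c [sc [kc [okc zc]]]] := small_o_rep oz.
have [oa oc] := (small_o_in_o sa, small_o_in_o sc).
have oyac : in_o (y - a * (z - c)) by in_o_closure.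
have [b [sb [kb [okb yb]]]] := small_o_rep oyac.
have ob := small_o_in_o sb.
exists (mx3 1 a b 0 1 c 0 0 1), (mx3 1 (x - a) (y - a * (z - c) - b) 0 1 (z - c) 0 0 1).
split.
- split; move=> i j; rewrite mxE; case_ord3 i j.
- split; last by move=> i j; rewrite mxE; case_ord3 i j.
  split; [split|].
  + by move=> i j; rewrite mxE; case_ord3 i j; in_o_closure.
  + rewrite det_mx3; ring.
  + move=> i j; rewrite mxE; case_ord3 i j;
      rewrite ?subrr ?subr0; first [exact: dvd_o0 | by exists ka | by exists kb | by exists kc].
- by rewrite mul_mx3; congr mx3; ring.
Qed.

Theorem theorem2p10 (R : algC -> Prop) (S : algC -> algC -> Prop)
  (HR : unit_rep_system R)
  (HS : forall c, R c -> residue_rep_system c (S c))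
  (A : 'M[algC]_3) (HA : inSL3 A) :
  exists (y1 y2 y3 : 'M[algC]_2) (d u C : 'M[algC]_3),
    Yset R S y1 /\ Yset R S y2 /\ Yset R S y3 /\
    D3 d /\ U3 u /\ GammaInf3 C /\
    A = phi2 (invmx y1) *m phi1 (invmx y2) *m phi2 (invmx y3) *m d *m u *m C.
Proof.
have [y1 [Y1 A_20]] := Yset_annihilator HR HS (HA.1 i1_3 i0_3) (HA.1 i2_3 i0_3).
set B1 := phi2 y1 *m A; have SL_B1 := inSL3_mul (inSL3_phi2 (Yset_inSL2 Y1)) HA.
have [y2 [Y2 B1_10]] := Yset_annihilator HR HS (SL_B1.1 i0_3 i0_3) (SL_B1.1 i1_3 i0_3).
set B2 := phi1 y2 *m B1; have SL_B2 := inSL3_mul (inSL3_phi1 (Yset_inSL2 Y2)) SL_B1.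
have [y3 [Y3 B2_21]] := Yset_annihilator HR HS (SL_B2.1 i1_3 i1_3) (SL_B2.1 i2_3 i1_3).
set T := phi2 y3 *m B2; have SL_T := inSL3_mul (inSL3_phi2 (Yset_inSL2 Y3)) SL_B2.
have B2_10 : B2 i1_3 i0_3 = 0 by rewrite phi1_mul_row1.
have B2_20 : B2 i2_3 i0_3 = 0 by rewrite phi1_mul_row2 phi2_mul_row2.
have T_10 : T i1_3 i0_3 = 0 by rewrite phi2_mul_row1 B2_10 B2_20 !mulr0 addr0.
have T_20 : T i2_3 i0_3 = 0 by rewrite phi2_mul_row2 B2_10 B2_20 !mulr0 addr0.
have T_21 : T i2_3 i1_3 = 0 by rewrite phi2_mul_row2.
have [d [N [Dd oN unip_N T_dN]]] := upper_triangular_factor SL_T T_10 T_20 T_21.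
have [u [C [Uu GC N_uC]]] := unipotent_factor oN unip_N.
exists y1, y2, y3, d, u, C; do 6 (split=> //).
rewrite -!mulmxA -N_uC -T_dN (phi2_invmxK _ (Yset_inSL2 Y3).2).
by rewrite (phi1_invmxK _ (Yset_inSL2 Y2).2) (phi2_invmxK _ (Yset_inSL2 Y1).2).
Qed.
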